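(* Let $G$ be a connected graph and let $Q$ be a clique separator of $G$. If $G$ is strong $Q$-colorable, then $\Gamma_Q$ contains no full antipodal triple.
   Context: Graphs are finite and simple. A clique is an inclusion-maximal set of pairwise adjacent vertices. A clique $Q$ of $G$ is a clique separator if $G-Q$ has at least two connected components; if their vertex sets are $V_1,\dots,V_s$, put $\gamma_i=G[V_i\cup Q]$ and $\Gamma_Q=\{\gamma_1,\dots,\gamma_s\}$. A relevant clique of $\gamma\in\Gamma_Q$ is a clique $K$ of the graph $\gamma$ with $K\cap Q\neq\emptyset$ and $K\neq Q$. An element $\gamma\in\Gamma_Q$ is a neighboring subgraph of a vertex $v$ if $v$ belongs to some relevant clique of $\gamma$; a set $W\subseteq\Gamma_Q$ is neighboring if there is $v\in Q$ such that every member of $W$ is a neighboring subgraph of $v$; a neighboring triple is a neighboring set of three elements. Antipodality on $\Gamma_Q$: $\gamma\leftrightarrow\gamma'$ iff there are relevant cliques $K$ of $\gamma$ and $K'$ of $\gamma'$ with $K\cap K'\cap Q\neq\emptyset$ and $K\cap Q$, $K'\cap Q$ inclusion-wise incomparable. A full antipodal triple is a neighboring triple whose elements are pairwise antipodal. $G$ is strong $Q$-colorable if there is $f:\Gamma_Q\to\{1,\dots,s\}$ (a strong $Q$-coloring) such that (1) $\gamma\leftrightarrow\gamma'$ implies $f(\gamma)\neq f(\gamma')$, and (2) $|f(\Lambda)|\le 2$ for every neighboring triple $\Lambda\subseteq\Gamma_Q$. *)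

From mathcomp Require Import all_boot.
Set Implicit Arguments. Unset Strict Implicit. Unset Printing Implicit Defensive.

Section Graph.
Variables (T : finType) (e : rel T).

Definition simple_graph := symmetric e /\ irreflexive e.

Definition connected_graph := forall x y : T, connect e x y.

Definition complete (K : {set T}) : bool :=
  [forall x in K, forall y in K, (x != y) ==> e x y].

Definition clique_in (S K : {set T}) : bool :=
  maxset (fun A : {set T} => (A \subset S) && complete A) K.

Definition clique (K : {set T}) : bool := clique_in [set: T] K.

Definition rel_minus (Q : {set T}) : rel T :=
  fun x y => [&& e x y, x \notin Q & y \notin Q].

Definition comp_minus (Q : {set T}) (x : T) : {set T} :=
  [set y | (y \notin Q) && connect (rel_minus Q) x y].

(* the vertex sets V_1, ..., V_s of the components of G - Q; the element
   gamma_i of Gamma_Q is G[V_i :|: Q], represented by V_i *)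
Definition comps (Q : {set T}) : {set {set T}} :=
  [set comp_minus Q x | x in ~: Q].

Definition clique_separator (Q : {set T}) : Prop :=
  clique Q /\ 2 <= #|comps Q|.

Definition relevant (Q V K : {set T}) : bool :=
  [&& clique_in (V :|: Q) K, K :&: Q != set0 & K != Q].

Definition neighboring_sub (Q V : {set T}) (v : T) : Prop :=
  exists K : {set T}, relevant Q V K /\ v \in K.

Definition neighboring_set (Q : {set T}) (W : {set {set T}}) : Prop :=
  exists2 v, v \in Q & forall V, V \in W -> neighboring_sub Q V v.

Definition neighboring_triple (Q : {set T}) (W : {set {set T}}) : Prop :=
  [/\ W \subset comps Q, #|W| = 3 & neighboring_set Q W].

Definition antipodal (Q V V' : {set T}) : Prop :=
  V != V' /\
  exists K K' : {set T}, [/\ relevant Q V K, relevant Q V' K',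
     K :&: K' :&: Q != set0,
     ~~ (K :&: Q \subset K' :&: Q) & ~~ (K' :&: Q \subset K :&: Q)].

Definition full_antipodal_triple (Q : {set T}) (W : {set {set T}}) : Prop :=
  neighboring_triple Q W /\
  forall V V', V \in W -> V' \in W -> V != V' -> antipodal Q V V'.

Definition strong_Q_coloring (Q : {set T}) (f : {set T} -> nat) : Prop :=
  [/\ forall V, V \in comps Q -> 1 <= f V <= #|comps Q|,
      forall V V', V \in comps Q -> V' \in comps Q ->
        antipodal Q V V' -> f V <> f V'
    & forall L, neighboring_triple Q L ->
        size (undup [seq f V | V <- enum L]) <= 2].

Definition strong_Q_colorable (Q : {set T}) : Prop :=
  exists f, strong_Q_coloring Q f.

End Graph.

From mathcomp Require Import all_boot.

(* Pairwise antipodal members of Gamma_Q receive pairwise distinct colors, so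
   a full antipodal triple would be a neighboring triple with three colors. *)

Lemma size_undup_map_enum (T : finType) (U : eqType) (f : T -> U) (A : {pred T}) :
  {in A &, injective f} -> size (undup [seq f x | x <- enum A]) = #|A|.
Proof.
move=> injf; rewrite undup_id ?size_map -?cardE //.
by rewrite map_inj_in_uniq ?enum_uniq // => x y; rewrite !mem_enum; apply: injf.
Qed.

Lemma strong_Q_coloring_inj {T : finType} {e : rel T} {Q : {set T}}
    {f : {set T} -> nat} {W : {set {set T}}} :
  strong_Q_coloring e Q f -> W \subset comps e Q ->
  (forall V V', V \in W -> V' \in W -> V != V' -> antipodal e Q V V') ->
  {in W &, injective f}.
Proof.
case=> _ f_anti _ sWQ W_anti V V' WV WV' fVV'.
apply/eqP; apply: contraT => neVV'.
by case: (f_anti V V' (subsetP sWQ V WV) (subsetP sWQ V' WV') (W_anti V V' WV WV' neVV') fVV').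
Qed.

Theorem lemma2p7 (T : finType) (e : rel T) (Q : {set T}) :
  simple_graph e -> connected_graph e -> clique_separator e Q ->
  strong_Q_colorable e Q ->
  ~ exists W : {set {set T}}, full_antipodal_triple e Q W.
Proof.
move=> _ _ _ [f col] [W [[sWQ W3 nbW] W_anti]].
have injf := strong_Q_coloring_inj col sWQ W_anti.
case: col => _ _ /(_ W (And3 sWQ W3 nbW)).
by rewrite size_undup_map_enum // W3.
Qed.
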